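(* Let $\mathcal{C}$ be a Fraïssé class with Fraïssé limit $\mathbf{U}$ and let $\mathbf{V},\mathbf{W}\in\overline{\mathcal{C}}$. If $r:\mathbf{U}\twoheadrightarrow\mathbf{V}$ is a universal homogeneous retraction and $s:\mathbf{V}\twoheadrightarrow\mathbf{W}$ is any retraction, then there exists a universal homogeneous retraction $\hat s:\mathbf{U}\twoheadrightarrow\mathbf{W}$.
   Context: An embedding is an injective homomorphism reflecting all relations. An age is a class of finitely generated structures of one signature with countably many isomorphism types, closed under finitely generated substructures (up to isomorphism) and with the joint embedding property; $\overline{\mathcal{C}}$ is the class of countable structures all of whose finitely generated substructures are isomorphic to members of $\mathcal{C}$; a Fraïssé class is an age with the amalgamation property, and its Fraïssé limit is the unique countable homogeneous structure with that age. A homomorphism $r:\mathbf{A}\to\mathbf{B}$ is a retraction if some homomorphism $\iota:\mathbf{B}\to\mathbf{A}$ satisfies $r\circ\iota=1_{\mathbf{B}}$. A universal homogeneous retraction $r:\mathbf{U}\twoheadrightarrow\mathbf{T}$ is a retraction such that (universality) for every $\mathbf{A}\in\overline{\operatorname{Age}(\mathbf{U})}$ and homomorphism $h:\mathbf{A}\to\mathbf{T}$ there is an embedding $\iota:\mathbf{A}\hookrightarrow\mathbf{U}$ with $h=r\circ\iota$, and (homogeneity) for every finitely generated $\mathbf{A}\le\mathbf{U}$ and embedding $\iota:\mathbf{A}\hookrightarrow\mathbf{U}$ with $r\circ\iota=r\restriction_A$ there is an automorphism $\alpha$ of $\mathbf{U}$ with $r\circ\alpha=r$ and $\alpha\restriction_A=\iota$.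 *)

From Stdlib Require Import List.
From Stdlib Require Fin.
Set Implicit Arguments.
Unset Strict Implicit.

(** Signatures: function symbols (constants = arity 0) and relation symbols. *)
Record Sig := {
  fsym : Type; farity : fsym -> nat;
  rsym : Type; rarity : rsym -> nat }.

Record Structure (L : Sig) := {
  carrier :> Type;
  fint : forall f : fsym L, (Fin.t (farity f) -> carrier) -> carrier;
  rint : forall r : rsym L, (Fin.t (rarity r) -> carrier) -> Prop }.

Arguments fint {L} s f a.
Arguments rint {L} s r a.
Arguments carrier {L} s.

Section Defs.
Variable L : Sig.

Definition homomorphism (A B : Structure L) (h : A -> B) : Prop :=
  (forall f a, h (fint A f a) = fint B f (fun i => h (a i))) /\
  (forall r a, rint A r a -> rint B r (fun i => h (a i))).

Definition embedding (A B : Structure L) (h : A -> B) : Prop :=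
  homomorphism h /\ (forall x y, h x = h y -> x = y) /\
  (forall r a, rint B r (fun i => h (a i)) -> rint A r a).

Definition isomorphism (A B : Structure L) (h : A -> B) : Prop :=
  embedding h /\ (forall y, exists x, h x = y).

Definition isomorphic (A B : Structure L) : Prop := exists h : A -> B, isomorphism h.

Definition automorphism (A : Structure L) (h : A -> A) : Prop := isomorphism h.

Definition closed (A : Structure L) (S : A -> Prop) : Prop :=
  forall f a, (forall i, S (a i)) -> S (fint A f a).

Definition generated (A : Structure L) (l : list A) (x : A) : Prop :=
  forall T : A -> Prop, closed T -> (forall y, In y l -> T y) -> T x.

Definition sub (A : Structure L) (S : A -> Prop) (HS : closed S) : Structure L :=
  {| carrier := {x : A | S x};
     fint := fun f a => exist S (fint A f (fun i => proj1_sig (a i)))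
                              (HS f _ (fun i => proj2_sig (a i)));
     rint := fun r a => rint A r (fun i => proj1_sig (a i)) |}.

Definition fg_subset (A : Structure L) (S : A -> Prop) : Prop :=
  exists l : list A, forall x, S x <-> generated l x.

Definition fin_gen (A : Structure L) : Prop :=
  exists l : list A, forall x, generated l x.

Definition countable_structure (A : Structure L) : Prop :=
  exists f : A -> nat, forall x y, f x = f y -> x = y.

Definition sclass := Structure L -> Prop.

Definition age (U : Structure L) : sclass :=
  fun A => fin_gen A /\ exists h : A -> U, embedding h.

Definition cbar (C : sclass) : sclass :=
  fun A => countable_structure A /\
    forall (S : A -> Prop) (HS : closed S), fg_subset S ->
      exists B, C B /\ isomorphic (sub HS) B.

Definition is_age (C : sclass) : Prop :=
  (forall A, C A -> fin_gen A) /\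
  (exists e : nat -> Structure L, forall A, C A -> exists n, isomorphic A (e n)) /\
  (forall A, C A -> forall (S : A -> Prop) (HS : closed S), fg_subset S ->
      exists B, C B /\ isomorphic (sub HS) B) /\
  (forall A B, C A -> C B ->
      exists D, C D /\ (exists f : A -> D, embedding f) /\ (exists g : B -> D, embedding g)).

Definition amalgamation (C : sclass) : Prop :=
  forall (A B1 B2 : Structure L) (f1 : A -> B1) (f2 : A -> B2),
    C A -> C B1 -> C B2 -> embedding f1 -> embedding f2 ->
    exists (D : Structure L) (g1 : B1 -> D) (g2 : B2 -> D),
      C D /\ embedding g1 /\ embedding g2 /\ forall a, g1 (f1 a) = g2 (f2 a).

Definition fraisse_class (C : sclass) : Prop := is_age C /\ amalgamation C.

(** Homogeneity: every embedding of a f.g. substructure into U (i.e. every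
    isomorphism between f.g. substructures) extends to an automorphism. *)
Definition homogeneous (U : Structure L) : Prop :=
  forall (S : U -> Prop) (HS : closed S), fg_subset S ->
    forall iota : sub HS -> U, embedding iota ->
      exists alpha : U -> U, automorphism alpha /\
        forall x : sub HS, alpha (proj1_sig x) = iota x.

Definition fraisse_limit (C : sclass) (U : Structure L) : Prop :=
  countable_structure U /\ homogeneous U /\
  (forall A, C A -> exists h : A -> U, embedding h) /\
  (forall A, age U A -> exists B, C B /\ isomorphic A B).

Definition retraction (A B : Structure L) (r : A -> B) : Prop :=
  homomorphism r /\ exists iota : B -> A, homomorphism iota /\ forall b, r (iota b) = b.

Definition uh_retraction (U T : Structure L) (r : U -> T) : Prop :=
  retraction r /\
  (forall (A : Structure L) (h : A -> T), cbar (age U) A -> homomorphism h ->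
     exists iota : A -> U, embedding iota /\ forall a, h a = r (iota a)) /\
  (forall (S : U -> Prop) (HS : closed S), fg_subset S ->
     forall iota : sub HS -> U, embedding iota ->
       (forall x : sub HS, r (iota x) = r (proj1_sig x)) ->
       exists alpha : U -> U, automorphism alpha /\ (forall x, r (alpha x) = r x) /\
         forall x : sub HS, alpha (proj1_sig x) = iota x).

End Defs.

(* Let X be the substructure r^-1(is(W)) of U.  The heart of the proof is that
   U is isomorphic to X by an embedding psi : U -> U with image exactly X; then
   s o r o psi is the required retraction, its universality and homogeneity
   being transported from those of r along psi. *)
From Stdlib Require Import List PeanoNat.
From Stdlib Require Import ClassicalEpsilon FunctionalExtensionality ProofIrrelevance.
From Stdlib Require Fin.
Set Implicit Arguments.
Unset Strict Implicit.

Section Basics.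
Variable L : Sig.
Implicit Types A B D : Structure L.

Lemma sig_proj_inj (T : Type) (P : T -> Prop) (x y : {a | P a}) :
  proj1_sig x = proj1_sig y -> x = y.
Proof. destruct x, y; simpl; intros ->; f_equal; apply proof_irrelevance. Qed.

Lemma hom_comp A B D (f : A -> B) (g : B -> D) :
  homomorphism f -> homomorphism g -> homomorphism (fun x => g (f x)).
Proof.
  intros [f_fun f_rel] [g_fun g_rel]; split.
  - intros h a. rewrite f_fun, g_fun. reflexivity.
  - intros r a H. apply (g_rel r (fun i => f (a i))). auto.
Qed.

Lemma emb_comp A B D (f : A -> B) (g : B -> D) :
  embedding f -> embedding g -> embedding (fun x => g (f x)).
Proof.
  intros [fh [finj frefl]] [gh [ginj grefl]]; split; [|split].
  - apply hom_comp; auto.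
  - auto.
  - intros r a H. apply frefl, (grefl r (fun i => f (a i))), H.
Qed.

Lemma sub_incl_emb A (S : A -> Prop) (HS : closed S) :
  embedding (fun x : sub HS => proj1_sig x).
Proof.
  split; [split|split].
  - reflexivity.
  - auto.
  - apply sig_proj_inj.
  - auto.
Qed.

Lemma emb_into_sub A B (S : B -> Prop) (HS : closed S) (g : A -> sub HS) :
  embedding (fun x => proj1_sig (g x)) -> embedding g.
Proof.
  intros [[g_fun g_rel] [ginj grefl]]; split; [split|split].
  - intros f a. apply sig_proj_inj, g_fun.
  - intros r a H. apply (g_rel r a H).
  - intros x y E. apply ginj. rewrite E. reflexivity.
  - intros r a H. apply (grefl r a H).
Qed.

Section InverseOnImage.
Variables (A B : Structure L) (h : A -> B) (hi : B -> A) (Y : B -> Prop).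
Hypothesis h_emb : embedding h.
Hypothesis hiK : forall x, hi (h x) = x.
Hypothesis hK : forall y, Y y -> h (hi y) = y.

Let tuple_in_image (n : nat) (a : Fin.t n -> B) :
  (forall i, Y (a i)) -> a = fun i => h (hi (a i)).
Proof. intros Ha. extensionality i. symmetry. auto. Qed.

Lemma inv_fint f a :
  (forall i, Y (a i)) -> hi (fint B f a) = fint A f (fun i => hi (a i)).
Proof.
  intros Ha. rewrite <- (hiK (fint A f _)), (proj1 (proj1 h_emb)).
  rewrite <- tuple_in_image by exact Ha. reflexivity.
Qed.

Lemma inv_rint r a :
  (forall i, Y (a i)) -> rint B r a <-> rint A r (fun i => hi (a i)).
Proof.
  intros Ha. rewrite (tuple_in_image Ha) at 1. split.
  - apply (proj2 (proj2 h_emb)).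
  - apply (proj2 (proj1 h_emb) r (fun i => hi (a i))).
Qed.

Lemma inv_comp_hom D (e : D -> B) :
  homomorphism e -> (forall c, Y (e c)) -> homomorphism (fun c => hi (e c)).
Proof.
  intros [e_fun e_rel] eY; split.
  - intros f a. rewrite e_fun. apply inv_fint. auto.
  - intros r a H. apply (inv_rint (a := fun i => e (a i))); auto.
Qed.

Lemma inv_comp_emb D (e : D -> B) :
  embedding e -> (forall c, Y (e c)) -> embedding (fun c => hi (e c)).
Proof.
  intros [e_hom [einj erefl]] eY; split; [|split].
  - apply inv_comp_hom; auto.
  - intros x y E. apply einj. rewrite <- (hK (eY x)), <- (hK (eY y)), E. reflexivity.
  - intros r a H. apply erefl, (inv_rint (a := fun i => e (a i))); auto.
Qed.
End InverseOnImage.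

Lemma iso_inv A B (h : A -> B) :
  isomorphism h -> exists hi : B -> A, isomorphism hi /\
    (forall y, h (hi y) = y) /\ (forall x, hi (h x) = x).
Proof.
  intros [h_emb h_surj].
  destruct (choice _ h_surj) as [hi hK].
  assert (hiK : forall x, hi (h x) = x) by (intro x; apply (proj1 (proj2 h_emb)), hK).
  exists hi. split; [split|auto].
  - apply (@inv_comp_emb _ _ h hi (fun _ => True) h_emb hiK (fun y _ => hK y)
             _ (fun y => y)); [split; [split|split]|]; auto.
  - intro x. exists (h x). auto.
Qed.

Lemma gen_closed A (l : list A) : closed (generated l).
Proof. intros f a Ha T HT Hl. apply HT. intro i. apply Ha; auto. Qed.

Lemma gen_in A (l : list A) y : In y l -> generated l y.
Proof. intros H T HT Hl. auto. Qed.

Lemma gen_fg A (l : list A) : fg_subset (generated l).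
Proof. exists l. intro; tauto. Qed.

Lemma gen_image A B (h : A -> B) (l : list A) x :
  homomorphism h -> generated l x -> generated (map h l) (h x).
Proof.
  intros [h_fun _] Hx. apply (Hx (fun z => generated (map h l) (h z))).
  - intros f a Ha. rewrite h_fun. apply gen_closed. exact Ha.
  - intros y Hy. apply gen_in, in_map, Hy.
Qed.

Lemma gen_image_inv A B (h : A -> B) (l : list A) y :
  homomorphism h -> generated (map h l) y -> exists x, generated l x /\ h x = y.
Proof.
  intros [h_fun _] Hy. apply Hy.
  - intros f a Ha. destruct (choice _ Ha) as [pre Hpre].
    exists (fint A f pre). split.
    + apply gen_closed. intro i. apply Hpre.
    + rewrite h_fun. f_equal. extensionality i. apply Hpre.
  - intros y' Hy'. apply in_map_iff in Hy'. destruct Hy' as [x [<- Hx]].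
    exists x. split; [apply gen_in|]; auto.
Qed.

Lemma lift_list (T : Type) (P : T -> Prop) (l : list T) :
  (forall y, In y l -> P y) -> exists l' : list {x | P x}, map (@proj1_sig _ _) l' = l.
Proof.
  induction l as [|a l IH]; intros H.
  - exists nil. reflexivity.
  - destruct IH as [l' E]. { intros; apply H; simpl; auto. }
    exists (exist _ a (H a (or_introl eq_refl)) :: l'). simpl. f_equal. auto.
Qed.

Lemma sub_fin_gen A (S : A -> Prop) (HS : closed S) :
  fg_subset S -> fin_gen (sub HS).
Proof.
  intros [l Hl].
  destruct (@lift_list _ S l) as [l' E]. { intros y Hy. apply Hl, gen_in, Hy. }
  exists l'. intros [x Sx].
  pose proof (proj1 (Hl x) Sx) as Hx. rewrite <- E in Hx.
  destruct (gen_image_inv (proj1 (sub_incl_emb HS)) Hx) as [x' [Hx' Ex']]. simpl in Ex'.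
  assert (E' : x' = exist _ x Sx) by (apply sig_proj_inj; exact Ex').
  rewrite <- E'. exact Hx'.
Qed.

Lemma cbar_age_self A : countable_structure A -> cbar (age A) A.
Proof.
  intros Hcnt. split; [exact Hcnt|].
  intros S HS Hfg. exists (sub HS). split.
  - split; [apply sub_fin_gen; exact Hfg|]. exists (fun x => proj1_sig x). apply sub_incl_emb.
  - exists (fun x => x). split; [split; [split|split]|]; auto.
    intro y; exists y; auto.
Qed.

Lemma tuple_in_list (T : Type) (k : nat) (a : Fin.t k -> T) :
  exists xs : list T, forall i, In (a i) xs.
Proof.
  induction k as [|k IH].
  - exists nil. intro i. exact (Fin.case0 _ i).
  - destruct (IH (fun i => a (Fin.FS i))) as [xs Hxs].
    exists (a Fin.F1 :: xs). intro i.
    apply (Fin.caseS' i (fun i => In (a i) (a Fin.F1 :: xs))); simpl; auto.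
Qed.

(* A map that agrees with an automorphism on every finite set of points is an
   embedding: each axiom of embeddings involves only finitely many points. *)
Lemma locally_automorphic_emb A (psi : A -> A) :
  (forall xs : list A, exists al, automorphism al /\ forall x, In x xs -> al x = psi x) ->
  embedding psi.
Proof.
  intros Hloc.
  assert (on_tuple : forall k (a : Fin.t k -> A) (xs : list A), exists al,
             embedding al /\ (fun i => al (a i)) = (fun i => psi (a i)) /\
             forall x, In x xs -> al x = psi x).
  { intros k a xs. destruct (tuple_in_list a) as [ys Hys].
    destruct (Hloc (ys ++ xs)) as [al [[Hal _] Hagree]].
    exists al. split; [exact Hal|split].
    - extensionality i. apply Hagree, in_or_app. left. apply Hys.
    - intros x Hx. apply Hagree, in_or_app. right. exact Hx. }
  split; [split|split].
  - intros f a.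
    destruct (on_tuple _ a (fint A f a :: nil)) as [al [[[al_fun _] _] [Ea Ex]]].
    rewrite <- Ex by (left; reflexivity). rewrite al_fun, Ea. reflexivity.
  - intros r a H. destruct (on_tuple _ a nil) as [al [[[_ al_rel] _] [Ea _]]].
    rewrite <- Ea. apply al_rel, H.
  - intros x y E. destruct (on_tuple 0 (Fin.case0 (fun _ => A)) (x :: y :: nil))
      as [al [[_ [al_inj _]] [_ Exy]]].
    apply al_inj. rewrite !Exy by (simpl; auto). exact E.
  - intros r a H. destruct (on_tuple _ a nil) as [al [[_ [_ al_refl]] [Ea _]]].
    apply al_refl. rewrite Ea. exact H.
Qed.

Lemma homogeneous_local A (g : A -> A) :
  homogeneous A -> embedding g ->
  forall xs : list A, exists al, automorphism al /\ forall x, In x xs -> al x = g x.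
Proof.
  intros Hhom Hg xs.
  destruct (Hhom _ (gen_closed (l := xs)) (gen_fg xs) (fun y => g (proj1_sig y))
              (emb_comp (sub_incl_emb _) Hg)) as [al [Hal Hext]].
  exists al. split; [exact Hal|].
  intros x Hx. exact (Hext (exist _ x (gen_in Hx))).
Qed.
End Basics.

Section BackAndForth.
Variables (L : Sig) (U : Structure L) (X : U -> Prop) (c : U -> nat).
Hypothesis c_inj : forall x y, c x = c y -> x = y.

Definition partial_aut_into (l : list (U * U)) : Prop :=
  (exists al, automorphism al /\ forall p, In p l -> al (fst p) = snd p) /\
  (forall p, In p l -> X (snd p)).

Hypothesis forth : forall l, partial_aut_into l ->
  forall u, exists b, partial_aut_into ((u, b) :: l).

Lemma partial_aut_nil : partial_aut_into nil.
Proof.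
  split; [|intros p []].
  exists (fun x => x). split; [|intros p []].
  split; [split; [split|split]|]; auto. intro y; exists y; auto.
Qed.

(* The back step is free: pull a point of X back along the inverse of the
   automorphism realising l. *)
Lemma partial_aut_back l v :
  partial_aut_into l -> X v -> exists a, partial_aut_into ((a, v) :: l).
Proof.
  intros [[al [Hal Hagree]] HX] Xv.
  destruct (iso_inv Hal) as [ali [_ [alK _]]].
  exists (ali v). split.
  - exists al. split; [exact Hal|]. intros p [<-|Hp]; simpl; auto.
  - intros p [<-|Hp]; simpl; auto.
Qed.

Definition decode (n : nat) : option U :=
  match excluded_middle_informative (exists u, c u = n) with
  | left H => Some (proj1_sig (constructive_indefinite_description _ H))
  | right _ => None
  end.

Lemma decode_code u : decode (c u) = Some u.
Proof.
  unfold decode. destruct (excluded_middle_informative _) as [H|H].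
  - destruct (constructive_indefinite_description _ H) as [u' Hu']; simpl.
    f_equal. apply c_inj, Hu'.
  - exfalso. apply H. exists u. reflexivity.
Qed.

(* Stage n of the construction puts the point of code n into the domain and,
   if it lies in X, into the range. *)
Definition forth_step (u : U) (l : list (U * U)) : list (U * U) :=
  (u, epsilon (inhabits u) (fun b => partial_aut_into ((u, b) :: l))) :: l.

Definition back_step (v : U) (l : list (U * U)) : list (U * U) :=
  if excluded_middle_informative (X v)
  then (epsilon (inhabits v) (fun a => partial_aut_into ((a, v) :: l)), v) :: l
  else l.

Definition step (n : nat) (l : list (U * U)) : list (U * U) :=
  match decode n with
  | Some u => back_step u (forth_step u l)
  | None => l
  end.

Fixpoint chain (n : nat) : list (U * U) :=
  match n with
  | 0 => nil
  | S m => step m (chain m)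
  end.

Lemma step_partial_aut n l : partial_aut_into l -> partial_aut_into (step n l).
Proof.
  intros Hl. unfold step. destruct (decode n) as [u|]; [|exact Hl].
  assert (Hf : partial_aut_into (forth_step u l))
    by exact (epsilon_spec (inhabits u) _ (forth Hl u)).
  unfold back_step. destruct (excluded_middle_informative (X u)) as [Xu|]; [|exact Hf].
  exact (epsilon_spec (inhabits u) _ (partial_aut_back Hf Xu)).
Qed.

Lemma back_step_incl v l : incl l (back_step v l).
Proof.
  intros p Hp. unfold back_step. destruct (excluded_middle_informative _); simpl; auto.
Qed.

Lemma step_incl n l : incl l (step n l).
Proof.
  intros p Hp. unfold step. destruct (decode n); [|exact Hp].
  apply back_step_incl. right. exact Hp.
Qed.

Lemma chain_partial_aut n : partial_aut_into (chain n).
Proof. induction n; simpl; auto using partial_aut_nil, step_partial_aut. Qed.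

Lemma chain_mono n m : n <= m -> incl (chain n) (chain m).
Proof.
  induction 1; [apply incl_refl|]. eapply incl_tran; [eassumption|apply step_incl].
Qed.

Lemma chain_domain u : exists b n, In (u, b) (chain n).
Proof.
  eexists. exists (S (c u)). simpl. unfold step. rewrite decode_code.
  apply back_step_incl. left. reflexivity.
Qed.

Lemma chain_range v : X v -> exists a n, In (a, v) (chain n).
Proof.
  intros Xv. eexists. exists (S (c v)). simpl. unfold step. rewrite decode_code.
  unfold back_step.
  destruct (excluded_middle_informative (X v)) as [_|nXv]; [left; reflexivity|].
  contradiction.
Qed.

Lemma chain_common x y x' y' n m :
  In (x, y) (chain n) -> In (x', y') (chain m) ->
  exists al, automorphism al /\ al x = y /\ al x' = y'.
Proof.
  intros Hn Hm. destruct (chain_partial_aut (max n m)) as [[al [Hal Hagree]] _].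
  exists al. split; [exact Hal|]. split.
  - apply (Hagree (x, y)), (chain_mono (Nat.le_max_l n m)), Hn.
  - apply (Hagree (x', y')), (chain_mono (Nat.le_max_r n m)), Hm.
Qed.

Definition limit_map (x : U) : U :=
  epsilon (inhabits x) (fun y => exists n, In (x, y) (chain n)).

Lemma limit_map_chain x : exists n, In (x, limit_map x) (chain n).
Proof.
  destruct (chain_domain x) as [b Hb].
  exact (epsilon_spec (inhabits x) (fun y => exists n, In (x, y) (chain n)) (ex_intro _ b Hb)).
Qed.

Lemma limit_map_local (xs : list U) :
  exists al, automorphism al /\ forall x, In x xs -> al x = limit_map x.
Proof.
  assert (Hn : exists n, forall x, In x xs -> In (x, limit_map x) (chain n)).
  { induction xs as [|x xs [n Hn]]; [exists 0; intros x []|].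
    destruct (limit_map_chain x) as [m Hm].
    exists (max n m). intros y [<-|Hy].
    - apply (chain_mono (Nat.le_max_r n m)), Hm.
    - apply (chain_mono (Nat.le_max_l n m)), Hn, Hy. }
  destruct Hn as [n Hn]. destruct (chain_partial_aut n) as [[al [Hal Hagree]] _].
  exists al. split; [exact Hal|]. intros x Hx. apply (Hagree (x, limit_map x)), Hn, Hx.
Qed.

Theorem back_and_forth :
  exists psi : U -> U, embedding psi /\ (forall x, X (psi x)) /\
                       (forall y, X y -> exists x, psi x = y).
Proof.
  exists limit_map. split; [|split].
  - apply locally_automorphic_emb, limit_map_local.
  - intro x. destruct (limit_map_chain x) as [n Hn].
    apply ((proj2 (chain_partial_aut n)) _ Hn).
  - intros y Xy. destruct (chain_range Xy) as [a [n Hn]]. exists a.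
    destruct (limit_map_chain a) as [m Hm].
    destruct (chain_common Hn Hm) as [al [_ [E1 E2]]]. congruence.
Qed.
End BackAndForth.

Section SectionPreimage.
Variables (L : Sig) (U V W : Structure L) (r : U -> V) (s : V -> W) (is : W -> V).
Hypothesis r_uh : uh_retraction r.
Hypothesis s_hom : homomorphism s.
Hypothesis is_hom : homomorphism is.
Hypothesis isK : forall w, s (is w) = w.

Let r_hom : homomorphism r := proj1 (proj1 r_uh).

(* The substructure r^-1(is(W)) of U. *)
Definition section_preimage (y : U) : Prop := r y = is (s (r y)).

Lemma section_preimage_intro y w : r y = is w -> section_preimage y.
Proof. unfold section_preimage. intros ->. rewrite isK. reflexivity. Qed.

Lemma section_preimage_closed : closed section_preimage.
Proof.
  destruct r_hom as [r_fun _], s_hom as [s_fun _], is_hom as [is_fun _].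
  intros f a Ha. unfold section_preimage.
  rewrite r_fun, s_fun, is_fun. f_equal. extensionality i. apply Ha.
Qed.

(* Universality of r gives an embedding e
   with r o e = is o s o r; homogeneity of r corrects e by an automorphism g
   preserving r so that g^-1 o e fixes the given points. *)
Lemma embedding_into_preimage_fixing (ys : list U) :
  countable_structure U -> (forall y, In y ys -> section_preimage y) ->
  exists f : U -> U, embedding f /\ (forall x, section_preimage (f x)) /\
                     (forall y, In y ys -> f y = y).
Proof.
  intros Hcnt Hys. destruct (proj2 r_uh) as [r_univ r_homog].
  destruct (r_univ U (fun x => is (s (r x))) (cbar_age_self Hcnt)
              (hom_comp (hom_comp r_hom s_hom) is_hom)) as [e [He HeE]].
  assert (gen_in_preimage : forall y, generated ys y -> section_preimage y)
    by (intros y Hy; exact (Hy _ section_preimage_closed Hys)).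
  set (j := fun y : sub (gen_closed (l := ys)) => e (proj1_sig y)).
  assert (Hj : embedding j) by exact (emb_comp (sub_incl_emb _) He).
  assert (j_r : forall y, r (j y) = r (proj1_sig y)).
  { intros [y Hy]. unfold j; simpl. rewrite <- HeE. symmetry. apply gen_in_preimage, Hy. }
  destruct (r_homog _ _ (gen_fg ys) j Hj j_r) as [g [Hg [g_r g_ext]]].
  destruct (iso_inv Hg) as [gi [Hgi [gK giK]]].
  assert (gi_r : forall z, r (gi z) = r z) by (intro z; rewrite <- (g_r (gi z)), gK; reflexivity).
  exists (fun x => gi (e x)). split; [|split].
  - exact (emb_comp He (proj1 Hgi)).
  - intro x. apply (section_preimage_intro (w := s (r x))). rewrite gi_r. symmetry. apply HeE.
  - intros y Hy. change (gi (j (exist _ y (gen_in Hy))) = y).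
    rewrite <- g_ext. apply giK.
Qed.

Lemma section_preimage_forth :
  countable_structure U -> homogeneous U ->
  forall l, partial_aut_into section_preimage l ->
  forall u, exists b, partial_aut_into section_preimage ((u, b) :: l).
Proof.
  intros Hcnt Hhomog l [[al [Hal al_l]] l_X] u.
  destruct (@embedding_into_preimage_fixing (map snd l) Hcnt) as [f [Hf [f_X f_fix]]].
  { intros y Hy. apply in_map_iff in Hy. destruct Hy as [p [<- Hp]]. apply l_X, Hp. }
  destruct (homogeneous_local Hhomog (emb_comp (proj1 Hal) Hf) (u :: map fst l))
    as [be [Hbe be_agree]].
  exists (f (al u)). split.
  - exists be. split; [exact Hbe|]. intros p [<-|Hp]; simpl.
    + apply be_agree. left. reflexivity.
    + rewrite be_agree by (right; apply in_map, Hp).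
      rewrite al_l by exact Hp. apply f_fix, in_map, Hp.
  - intros p [<-|Hp]; [apply f_X|apply l_X, Hp].
Qed.

Section Transfer.
Variable psi : U -> U.
Hypothesis psi_emb : embedding psi.
Hypothesis psi_into : forall x, section_preimage (psi x).
Hypothesis psi_onto : forall y, section_preimage y -> exists x, psi x = y.

Definition psi_inv (y : U) : U := epsilon (inhabits y) (fun x => psi x = y).

Lemma psi_invK y : section_preimage y -> psi (psi_inv y) = y.
Proof. intros Xy. exact (epsilon_spec (inhabits y) (fun x => psi x = y) (psi_onto Xy)). Qed.

Lemma psi_inv_psi x : psi_inv (psi x) = x.
Proof. apply (proj1 (proj2 psi_emb)), psi_invK, psi_into. Qed.

Definition s_hat (x : U) : W := s (r (psi x)).

(* A section of s_hat is psi_inv o ir o is, with ir a section of r; it lands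
   in the image of psi since r o ir o is = is. *)
Lemma s_hat_retraction : retraction s_hat.
Proof.
  destruct (proj2 (proj1 r_uh)) as [ir [ir_hom irK]].
  assert (section_X : forall w, section_preimage (ir (is w)))
    by (intro w; apply (section_preimage_intro (w := w)), irK).
  split; [exact (hom_comp (hom_comp (proj1 psi_emb) r_hom) s_hom)|].
  exists (fun w => psi_inv (ir (is w))). split.
  - exact (inv_comp_hom psi_emb psi_inv_psi psi_invK (hom_comp is_hom ir_hom) section_X).
  - intro w. unfold s_hat. rewrite psi_invK by apply section_X. rewrite irK. apply isK.
Qed.

(* Universality of s_hat: lift h : A -> W along is, use universality of r, and
   pull the resulting embedding back along psi. *)
Lemma s_hat_universal (A : Structure L) (h : A -> W) :
  cbar (age U) A -> homomorphism h ->
  exists iota : A -> U, embedding iota /\ forall a, h a = s_hat (iota a).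
Proof.
  intros HA Hh.
  destruct ((proj1 (proj2 r_uh)) A (fun a => is (h a)) HA (hom_comp Hh is_hom))
    as [e [He HeE]].
  assert (e_X : forall a, section_preimage (e a))
    by (intro a; apply (section_preimage_intro (w := h a)); symmetry; apply HeE).
  exists (fun a => psi_inv (e a)). split.
  - exact (inv_comp_emb psi_emb psi_inv_psi psi_invK He e_X).
  - intro a. unfold s_hat. rewrite psi_invK by apply e_X. rewrite <- HeE. symmetry. apply isK.
Qed.

Lemma r_invariant_preimage (be : U -> U) y :
  (forall x, r (be x) = r x) -> section_preimage y -> section_preimage (be y).
Proof. unfold section_preimage. intros be_r. rewrite !be_r. auto. Qed.

(* An automorphism of U preserving r restricts to an automorphism of the image
   of psi, hence conjugates back to an automorphism of U. *)
Lemma conjugate_automorphism (be : U -> U) :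
  automorphism be -> (forall x, r (be x) = r x) ->
  automorphism (fun x => psi_inv (be (psi x))).
Proof.
  intros Hbe be_r. destruct (iso_inv Hbe) as [bi [_ [bK _]]].
  assert (bi_r : forall x, r (bi x) = r x) by (intro x; rewrite <- (be_r (bi x)), bK; reflexivity).
  split.
  - apply (inv_comp_emb psi_emb psi_inv_psi psi_invK (emb_comp psi_emb (proj1 Hbe))).
    intro x. apply r_invariant_preimage; auto.
  - intro y. exists (psi_inv (bi (psi y))).
    rewrite psi_invK by (apply r_invariant_preimage; auto). rewrite bK. apply psi_inv_psi.
Qed.

Lemma psi_image_gen (S : U -> Prop) (l : list U) :
  (forall x, S x <-> generated l x) ->
  forall y, generated (map psi l) y -> section_preimage y /\ S (psi_inv y).
Proof.
  intros Hl y Hy. destruct (gen_image_inv (proj1 psi_emb) Hy) as [x [Hx <-]].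
  split; [apply psi_into|]. rewrite psi_inv_psi. apply Hl, Hx.
Qed.

(* Homogeneity of s_hat: transport the substructure S and the embedding iota
   along psi, extend the result by homogeneity of r to an automorphism of U
   preserving r, and conjugate it back by psi. *)
Lemma s_hat_homogeneous (S : U -> Prop) (HS : closed S) :
  fg_subset S -> forall iota : sub HS -> U, embedding iota ->
  (forall x : sub HS, s_hat (iota x) = s_hat (proj1_sig x)) ->
  exists alpha : U -> U, automorphism alpha /\ (forall x, s_hat (alpha x) = s_hat x) /\
    forall x : sub HS, alpha (proj1_sig x) = iota x.
Proof.
  intros [l Hl] iota Hiota iota_s.
  set (HS' := gen_closed (l := map psi l)).
  pose proof (psi_image_gen Hl) as S'_XS.
  assert (S'_X : forall y, generated (map psi l) y -> section_preimage y)
    by (intros y Hy; apply (S'_XS y Hy)).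
  assert (S'_S : forall y, generated (map psi l) y -> S (psi_inv y))
    by (intros y Hy; apply (S'_XS y Hy)).
  set (m := fun y : sub HS' => exist S (psi_inv (proj1_sig y)) (S'_S _ (proj2_sig y))
                                 : sub HS).
  assert (Hm : embedding m).
  { apply emb_into_sub. simpl.
    apply (inv_comp_emb psi_emb psi_inv_psi psi_invK (sub_incl_emb HS')).
    intro y. apply S'_X, (proj2_sig y). }
  set (iota' := fun y => psi (iota (m y))).
  assert (iota'_r : forall y, r (iota' y) = r (proj1_sig y)).
  { intro y. unfold iota'. rewrite (psi_into (iota (m y))). fold (s_hat (iota (m y))).
    rewrite iota_s. simpl. unfold s_hat. rewrite psi_invK by apply S'_X, (proj2_sig y).
    symmetry. apply S'_X, (proj2_sig y). }
  destruct ((proj2 (proj2 r_uh)) _ HS' (gen_fg _) iota'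
              (emb_comp Hm (emb_comp Hiota psi_emb)) iota'_r) as [be [Hbe [be_r be_ext]]].
  exists (fun x => psi_inv (be (psi x))). split; [|split].
  - apply conjugate_automorphism; assumption.
  - intro x. unfold s_hat.
    rewrite psi_invK by (apply r_invariant_preimage; auto). rewrite be_r. reflexivity.
  - intros [x Sx].
    assert (Hx : generated (map psi l) (psi x))
      by (apply (gen_image (proj1 psi_emb)), Hl, Sx).
    simpl. change (be (psi x)) with (be (proj1_sig (exist _ (psi x) Hx : sub HS'))).
    rewrite be_ext. unfold iota'. rewrite psi_inv_psi. f_equal.
    apply sig_proj_inj. simpl. apply psi_inv_psi.
Qed.

Theorem s_hat_uh : uh_retraction s_hat.
Proof.
  split; [exact s_hat_retraction|split].
  - exact s_hat_universal.
  - exact s_hat_homogeneous.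
Qed.
End Transfer.
End SectionPreimage.

Unset Implicit Arguments.
Set Strict Implicit.

Theorem proposition4p5 (L : Sig) (C : Structure L -> Prop) (U V W : Structure L) :
  fraisse_class C -> fraisse_limit C U -> cbar C V -> cbar C W ->
  forall r : U -> V, uh_retraction r ->
  forall s : V -> W, retraction s ->
  exists s_hat : U -> W, uh_retraction s_hat.
Proof.
  intros _ [U_cnt [U_homog _]] _ _ r Hr s [s_hom [is [is_hom isK]]].
  pose proof U_cnt as [c c_inj].
  destruct (back_and_forth c_inj
              (section_preimage_forth Hr s_hom is_hom isK U_cnt U_homog))
    as [psi [psi_emb [psi_into psi_onto]]].
  exists (s_hat r s psi). exact (s_hat_uh Hr s_hom is_hom isK psi_emb psi_into psi_onto).
Qed.
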